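(* Let $(W,S)$ be a dihedral Coxeter system, i.e. $|S|=2$. For reflections $t,t'\in T$, we have $\ell(t')<\ell(t)$ if and only if $t'\sqsubseteq t$ and $t'\neq t$.
   Context: $(W,S)$ is a Coxeter system with length function $\ell$, reflections $T=\{wsw^{-1}:w\in W,\ s\in S\}$ and Bruhat order $\leqslant$. The Bruhat graph $\Omega_{W,S}$ has vertex set $W$ and an arrow $u\to v$ iff $uv^{-1}\in T$ and $u<v$; $\Omega_{W,S}(Y)$ is its induced subgraph on $Y$. A reflection subgroup $W'$ (a subgroup generated by reflections) has canonical Coxeter generators $S'=\{t\in T:N(t)\cap W'=\{t\}\}$, where $N(v)=\{t\in T:\ell(tv)<\ell(v)\}$; it is dihedral if $|S'|=2$. $t\sqsubseteq' t'$ iff $t=t'$ or there is a dihedral reflection subgroup $W'\ni t,t'$ such that the directed distance from $t$ to $t'$ in $\Omega_{W,S}(W')$ is finite; $\sqsubseteq$ is the transitive closure of $\sqsubseteq'$. *)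

From Stdlib Require Import List Arith Relations ClassicalEpsilon.
Import ListNotations.
Set Implicit Arguments.

Record group := Group {
  gcar :> Type;
  gmul : gcar -> gcar -> gcar;
  gone : gcar;
  ginv : gcar -> gcar;
  gmulA : forall x y z, gmul x (gmul y z) = gmul (gmul x y) z;
  gmul1l : forall x, gmul gone x = x;
  gmulVl : forall x, gmul (ginv x) x = gone
}.

Arguments gmul {g}.
Arguments gone {g}.
Arguments ginv {g}.

Fixpoint gpow {G : group} (x : G) (n : nat) : G :=
  match n with 0 => gone | S k => gmul x (gpow x k) end.

Definition subgroup {G : group} (P : G -> Prop) : Prop :=
  P gone /\ (forall x y, P x -> P y -> P (gmul x y)) /\ (forall x, P x -> P (ginv x)).

Definition generated {G : group} (X : G -> Prop) (w : G) : Prop :=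
  forall P : G -> Prop, subgroup P -> (forall x, X x -> P x) -> P w.

Definition hom {G H : group} (phi : G -> H) : Prop :=
  forall x y, phi (gmul x y) = gmul (phi x) (phi y).

(* ---------- Coxeter systems (Bourbaki) ----------
   S is a set of elements of order 2 generating W, and W has the presentation
   < S | (s s')^{m(s,s')} = 1 >, m(s,s') the order of s s' (infinite allowed);
   stated via the universal property of the presentation. *)
Definition coxeter_system {W : group} (S : W -> Prop) : Prop :=
  (forall s, S s -> s <> gone /\ gmul s s = gone) /\
  (forall w, generated S w) /\
  (forall (H : group) (f : W -> H),
     (forall s s' k, S s -> S s' -> gpow (gmul s s') k = gone ->
                     gpow (gmul (f s) (f s')) k = gone) ->
     exists phi : W -> H, hom phi /\ forall s, S s -> phi s = f s).

Definition dihedral_system {W : group} (S : W -> Prop) : Prop :=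
  exists a b : W, a <> b /\ forall x, S x <-> x = a \/ x = b.

Section Coxeter.
Context {W : group} (S : W -> Prop).

Definition word_prod (l : list W) : W := fold_right gmul gone l.

Definition expressible (w : W) (n : nat) : Prop :=
  exists l : list W, length l = n /\ Forall S l /\ word_prod l = w.

Definition len (w : W) : nat :=
  epsilon (inhabits 0)
    (fun n => expressible w n /\ forall m, expressible w m -> n <= m).

Definition reflection (t : W) : Prop :=
  exists w s, S s /\ t = gmul (gmul w s) (ginv w).

Definition bruhat_step (u v : W) : Prop :=
  exists t, reflection t /\ v = gmul t u /\ len u < len v.

Definition bruhat_le : relation W := clos_refl_trans W bruhat_step.
Definition bruhat_lt (u v : W) : Prop := bruhat_le u v /\ u <> v.

Definition bruhat_arrow (u v : W) : Prop :=
  reflection (gmul u (ginv v)) /\ bruhat_lt u v.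

Definition induced_arrow (Y : W -> Prop) (u v : W) : Prop :=
  Y u /\ Y v /\ bruhat_arrow u v.

Definition finite_dist (Y : W -> Prop) (x y : W) : Prop :=
  Y x /\ Y y /\ clos_refl_trans W (induced_arrow Y) x y.

Definition reflection_subgroup (P : W -> Prop) : Prop :=
  exists X : W -> Prop, (forall x, X x -> reflection x) /\
                        (forall w, P w <-> generated X w).

Definition inv_set (v t : W) : Prop := reflection t /\ len (gmul t v) < len v.

Definition canon_gens (P : W -> Prop) (t : W) : Prop :=
  reflection t /\ forall x, (inv_set t x /\ P x) <-> x = t.

Definition dihedral_refl_subgroup (P : W -> Prop) : Prop :=
  reflection_subgroup P /\
  exists a b, a <> b /\ forall t, canon_gens P t <-> t = a \/ t = b.

Definition sqsub1 (t t' : W) : Prop :=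
  t = t' \/
  exists P, dihedral_refl_subgroup P /\ P t /\ P t' /\ finite_dist P t t'.

Definition sqsub : relation W := clos_trans W sqsub1.

End Coxeter.

From Stdlib Require Import List Arith Relations Wf_nat Lia Classical ClassicalEpsilon.
Import ListNotations.
Set Implicit Arguments.

(* Length is additive modulo 2, because the Coxeter presentation maps onto Z/2
   sending every generator to 1; hence reflections, being conjugates of
   generators, have odd length.  In a dihedral group a reduced word alternates
   between the two generators, so conversely every element of odd length is a
   reflection.  Consequently any two elements whose lengths differ by one are
   joined by an arrow of the Bruhat graph, and the prefixes of a reduced word
   for t give a directed path to t from any shorter element.  Since W itself is
   a dihedral reflection subgroup (its canonical generators are S), this yields
   t' ⊑ t.  Conversely, arrows of the Bruhat graph increase length in any
   Coxeter group, hence so does ⊑. *)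

Arguments gmulA {g} x y z.
Arguments gmul1l {g} x.
Arguments gmulVl {g} x.

Section GroupFacts.
Context {G : group}.
Implicit Types x y : G.

Lemma gmulV x : gmul x (ginv x) = gone.
Proof.
  transitivity (gmul (gmul (ginv (ginv x)) (ginv x)) (gmul x (ginv x))).
  - rewrite gmulVl, gmul1l. reflexivity.
  - rewrite <- gmulA, (gmulA (ginv x) x), gmulVl, gmul1l. apply gmulVl.
Qed.

Lemma gmul1r x : gmul x gone = x.
Proof. rewrite <- (gmulVl x), gmulA, gmulV, gmul1l. reflexivity. Qed.

Lemma ginv_unique {x y} : gmul x y = gone -> x = ginv y.
Proof.
  intro E. rewrite <- (gmul1r x), <- (gmulV y), gmulA, E, gmul1l. reflexivity.
Qed.

Lemma ginvM x y : ginv (gmul x y) = gmul (ginv y) (ginv x).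
Proof.
  symmetry. apply ginv_unique.
  rewrite <- gmulA, (gmulA (ginv x) x), gmulVl, gmul1l. apply gmulVl.
Qed.

Lemma ginv1 : ginv (@gone G) = gone.
Proof. symmetry. apply ginv_unique, gmul1l. Qed.

Lemma ginv_involution {x} : gmul x x = gone -> ginv x = x.
Proof. intro E. symmetry. now apply ginv_unique. Qed.

End GroupFacts.

Lemma rt_measure_incr (A : Type) (R : relation A) (f : A -> nat) :
  (forall x y, R x y -> x = y \/ f x < f y) ->
  forall x y, clos_refl_trans A R x y -> x = y \/ f x < f y.
Proof.
  intros HR x y Hxy.
  induction Hxy as [x y Hxy | x | x y z _ IH1 _ IH2]; auto.
  destruct IH1 as [-> | H1], IH2 as [-> | H2]; auto. right; lia.
Qed.

Section SqsubLength.
Context {W : group} (S : W -> Prop).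

Lemma bruhat_le_len u v : bruhat_le S u v -> u = v \/ len S u < len S v.
Proof.
  apply rt_measure_incr. intros x y [t [_ [_ Hlt]]]. now right.
Qed.

Lemma sqsub1_len u v : sqsub1 S u v -> u = v \/ len S u < len S v.
Proof.
  intros [-> | [P [_ [_ [_ [_ [_ Hpath]]]]]]]; [now left|].
  revert Hpath. apply rt_measure_incr.
  intros x y [_ [_ [_ [Hle Hne]]]].
  destruct (bruhat_le_len Hle); [contradiction | now right].
Qed.

Lemma sqsub_len u v : sqsub S u v -> u = v \/ len S u < len S v.
Proof.
  intro H. apply clos_t_clos_rt in H. revert H. apply rt_measure_incr, sqsub1_len.
Qed.

End SqsubLength.

Definition xor_group : group.
Proof.
  refine (@Group bool xorb false (fun b => b) _ _ _);
    intros; repeat match goal with b : bool |- _ => destruct b end; reflexivity.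
Defined.

Lemma word_prod_app (W : group) (l1 l2 : list W) :
  word_prod (l1 ++ l2) = gmul (word_prod l1) (word_prod l2).
Proof.
  induction l1 as [|x l IH]; simpl.
  - now rewrite gmul1l.
  - now rewrite IH, gmulA.
Qed.

Fixpoint alt_word {W : group} (x y : W) (n : nat) : list W :=
  match n with 0 => [] | S n => x :: alt_word y x n end.

Lemma alt_word_snoc (W : group) n : forall x y : W,
  alt_word x y (S n) = alt_word x y n ++ [if Nat.odd n then y else x].
Proof.
  induction n as [|n IH]; intros x y; [reflexivity|].
  change (x :: alt_word y x (S n)
          = x :: alt_word y x n ++ [if Nat.odd (S n) then y else x]).
  rewrite IH, Nat.odd_succ, <- Nat.negb_odd. now destruct (Nat.odd n).
Qed.

Lemma alt_word_odd_conj (W : group) k (x y : W) :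
  alt_word x y (2 * k + 3) = x :: alt_word y x (2 * k + 1) ++ [x].
Proof.
  replace (2 * k + 3) with (S (S (2 * k + 1))) by lia.
  change (x :: alt_word y x (S (2 * k + 1)) = x :: alt_word y x (2 * k + 1) ++ [x]).
  now rewrite alt_word_snoc, Nat.odd_odd.
Qed.

Section Words.
Context {W : group} (S : W -> Prop).
Hypothesis S_invol : forall s, S s -> gmul s s = gone.
Hypothesis S_generates : forall w, generated S w.

Lemma generator_reflection s : S s -> reflection S s.
Proof. intro Hs. exists gone, s. now rewrite gmul1l, ginv1, gmul1r. Qed.

Lemma reflection_conj_generator x t :
  S x -> reflection S t -> reflection S (gmul x (gmul t x)).
Proof.
  intros Hx [w [s [Hs ->]]]. exists (gmul x w), s. split; [exact Hs|].
  rewrite ginvM, (ginv_involution (S_invol Hx)). now rewrite !gmulA.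
Qed.

Lemma alt_word_odd_reflection k : forall x y,
  S x -> S y -> reflection S (word_prod (alt_word x y (2 * k + 1))).
Proof.
  induction k as [|k IH]; intros x y Hx Hy.
  - simpl. rewrite gmul1r. now apply generator_reflection.
  - rewrite Nat.mul_succ_r, <- Nat.add_assoc.
    rewrite alt_word_odd_conj. simpl. rewrite word_prod_app. simpl. rewrite gmul1r.
    now apply reflection_conj_generator, IH.
Qed.

Lemma word_prod_rev l : Forall S l -> word_prod (rev l) = ginv (word_prod l).
Proof.
  induction 1 as [|x l Hx _ IH]; simpl.
  - now rewrite ginv1.
  - rewrite word_prod_app, IH, ginvM. simpl.
    now rewrite gmul1r, (ginv_involution (S_invol Hx)).
Qed.

Lemma expressible_exists w : exists n, expressible S w n.
Proof.
  apply (S_generates w (P := fun w => exists n, expressible S w n)).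
  - split; [|split].
    + now exists 0, [].
    + intros x y [n [l [<- [Hl <-]]]] [m [l' [<- [Hl' <-]]]].
      exists (length l + length l'), (l ++ l').
      rewrite length_app, word_prod_app. repeat split. now apply Forall_app.
    + intros x [n [l [<- [Hl <-]]]]. exists (length l), (rev l).
      rewrite length_rev, word_prod_rev by exact Hl. repeat split. now apply Forall_rev.
  - intros x Hx. exists 1, [x]. repeat split; [now repeat constructor | apply gmul1r].
Qed.

Lemma len_spec w :
  expressible S w (len S w) /\ forall m, expressible S w m -> len S w <= m.
Proof.
  unfold len. apply epsilon_spec.
  destruct (dec_inh_nat_subset_has_unique_least_element (expressible S w))
    as [n [Hn _]]; [intro; apply classic | apply expressible_exists |].
  now exists n.
Qed.

Lemma len_word_prod_le l : Forall S l -> len S (word_prod l) <= length l.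
Proof. intro Hl. apply len_spec. now exists l. Qed.

Lemma len_eq0 {w} : len S w = 0 -> w = gone.
Proof.
  intro E. destruct (proj1 (len_spec w)) as [l [Hl [_ <-]]].
  rewrite E in Hl. now destruct l.
Qed.

Lemma len_one : len S gone = 0.
Proof. pose proof (len_word_prod_le (Forall_nil S)). simpl in *. lia. Qed.

Definition reduced (l : list W) : Prop :=
  Forall S l /\
  forall l', Forall S l' -> word_prod l' = word_prod l -> length l <= length l'.

Lemma reduced_word_exists w :
  exists l, reduced l /\ word_prod l = w /\ length l = len S w.
Proof.
  destruct (len_spec w) as [[l [Hlen [Hl Hw]]] Hmin].
  exists l. repeat split; auto.
  intros l' Hl' Hw'. rewrite Hlen. apply Hmin.
  exists l'. repeat split; [exact Hl' | congruence].
Qed.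

Lemma len_reduced l : reduced l -> len S (word_prod l) = length l.
Proof.
  intros [Hl Hmin]. apply Nat.le_antisymm; [now apply len_word_prod_le|].
  destruct (reduced_word_exists (word_prod l)) as [l' [[Hl' _] [Hw <-]]].
  now apply Hmin.
Qed.

Lemma reduced_app {l1 l2} : reduced (l1 ++ l2) -> reduced l1 /\ reduced l2.
Proof.
  intros [Hl Hmin]. apply Forall_app in Hl as [Hl1 Hl2].
  split; split; auto; intros l' Hl' Hw.
  - specialize (Hmin (l' ++ l2)).
    rewrite !word_prod_app, Hw, !length_app in Hmin.
    enough (length l1 + length l2 <= length l' + length l2) by lia.
    apply Hmin; [now apply Forall_app | reflexivity].
  - specialize (Hmin (l1 ++ l')).
    rewrite !word_prod_app, Hw, !length_app in Hmin.
    enough (length l1 + length l2 <= length l1 + length l') by lia.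
    apply Hmin; [now apply Forall_app | reflexivity].
Qed.

Lemma reduced_no_square x m : ~ reduced (x :: x :: m).
Proof.
  intros [Hl Hmin]. inversion_clear Hl as [|? ? Hx Hl']. inversion_clear Hl'.
  enough (length (x :: x :: m) <= length m) by (simpl in *; lia).
  apply Hmin; auto. simpl. now rewrite gmulA, (S_invol Hx), gmul1l.
Qed.

Lemma hom_sign_len (sign : W -> xor_group) :
  hom sign -> (forall s, S s -> sign s = true) ->
  forall w, sign w = Nat.odd (len S w).
Proof.
  intros Hhom Hgen w.
  assert (sign1 : sign gone = false).
  { pose proof (Hhom gone gone) as E. rewrite gmul1l in E.
    destruct (sign gone); [discriminate | reflexivity]. }
  destruct (reduced_word_exists w) as [l [[Hl _] [<- <-]]].
  induction Hl as [|x l Hx _ IH]; [exact sign1|].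
  simpl. rewrite Hhom, IH, (Hgen x Hx), Nat.odd_succ, <- Nat.negb_odd.
  reflexivity.
Qed.

End Words.

Lemma coxeter_len_odd_mul (W : group) (S : W -> Prop) :
  coxeter_system S ->
  forall x y, Nat.odd (len S (gmul x y)) = xorb (Nat.odd (len S x)) (Nat.odd (len S y)).
Proof.
  intros [S_inv [S_generates Huniv]] x y.
  destruct (Huniv xor_group (fun _ => true)) as [sign [Hhom Hgen]].
  { intros s s' k _ _ _.
    induction k as [|k IH]; [reflexivity|]. cbn [gpow]. now rewrite IH. }
  assert (S_invol : forall s, S s -> gmul s s = gone) by firstorder.
  rewrite <- !(hom_sign_len S_invol S_generates Hhom Hgen). apply Hhom.
Qed.


Section LengthParity.
Context {W : group} (S : W -> Prop).
Hypothesis S_invol : forall s, S s -> gmul s s = gone.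
Hypothesis S_nontrivial : forall s, S s -> s <> gone.
Hypothesis S_generates : forall w, generated S w.
Hypothesis len_odd_mul :
  forall x y, Nat.odd (len S (gmul x y)) = xorb (Nat.odd (len S x)) (Nat.odd (len S y)).

Lemma len_generator s : S s -> len S s = 1.
Proof.
  intro Hs.
  pose proof (len_word_prod_le S_invol S_generates (Forall_cons _ Hs (Forall_nil S))).
  simpl in *. rewrite gmul1r in *.
  enough (len S s <> 0) by lia.
  intro E. exact (S_nontrivial Hs (len_eq0 S_invol S_generates E)).
Qed.

Lemma odd_len_inv w : Nat.odd (len S (ginv w)) = Nat.odd (len S w).
Proof.
  pose proof (len_odd_mul (ginv w) w) as E.
  rewrite gmulVl, (len_one S_invol S_generates) in E.
  destruct (Nat.odd (len S (ginv w))), (Nat.odd (len S w)); easy.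
Qed.

Lemma odd_len_div x y :
  Nat.odd (len S (gmul x (ginv y))) = xorb (Nat.odd (len S x)) (Nat.odd (len S y)).
Proof. now rewrite len_odd_mul, odd_len_inv. Qed.

Lemma reflection_odd_len t : reflection S t -> Nat.odd (len S t) = true.
Proof.
  intros [w [s [Hs ->]]].
  rewrite !len_odd_mul, odd_len_inv, (len_generator Hs).
  now destruct (Nat.odd (len S w)).
Qed.

Lemma canon_gens_full t : canon_gens S (fun _ => True) t <-> S t.
Proof.
  split.
  - intros [Ht Hmin].
    destruct (reduced_word_exists S_invol S_generates t) as [[|x m] [Hred [Hw Hlen]]].
    { pose proof (reflection_odd_len Ht). rewrite <- Hlen in *. discriminate. }
    pose proof Hred as [Hxm _]. inversion_clear Hxm as [|? ? Hx Hm].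
    enough (x = t) by congruence.
    apply Hmin. split; [|trivial]. split; [now apply generator_reflection|].
    rewrite <- Hlen, <- Hw. simpl. rewrite gmulA, (S_invol Hx), gmul1l.
    pose proof (len_word_prod_le S_invol S_generates Hm). lia.
  - intro Hs. split; [now apply generator_reflection|]. intro x. split.
    + intros [[_ Hlt] _]. rewrite (len_generator Hs) in Hlt.
      assert (E : gmul x t = gone) by (apply (len_eq0 S_invol S_generates); lia).
      rewrite (ginv_unique E). exact (ginv_involution (S_invol Hs)).
    + intros ->. repeat split; [now apply generator_reflection|].
      rewrite (S_invol Hs), (len_one S_invol S_generates), (len_generator Hs). lia.
Qed.

Variables a b : W.
Hypothesis a_neq_b : a <> b.
Hypothesis S_pair : forall x, S x <-> x = a \/ x = b.

Lemma reduced_alternating m : forall x y,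
  S x -> S y -> x <> y -> reduced S (x :: m) -> x :: m = alt_word x y (length (x :: m)).
Proof.
  induction m as [|z m IH]; intros x y Hx Hy Hxy Hred; [reflexivity|].
  pose proof Hred as [Hl _]. inversion_clear Hl as [|? ? _ Hzm].
  inversion_clear Hzm as [|? ? Hz _].
  assert (z = x \/ z = y) as [-> | ->].
  { apply S_pair in Hx, Hy, Hz. intuition congruence. }
  - now apply reduced_no_square in Hred.
  - change (x :: y :: m = x :: alt_word y x (length (y :: m))). f_equal.
    apply IH; auto. exact (proj2 (reduced_app (l1 := [x]) Hred)).
Qed.

Lemma odd_len_reflection w : Nat.odd (len S w) = true -> reflection S w.
Proof.
  intro Hodd.
  destruct (reduced_word_exists S_invol S_generates w) as [[|x m] [Hred [<- Hlen]]].
  { rewrite <- Hlen in Hodd. discriminate. }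
  pose proof Hred as [Hxm _]. inversion_clear Hxm as [|? ? Hx _].
  assert (exists y, S y /\ x <> y) as [y [Hy Hxy]].
  { apply S_pair in Hx as [-> | ->]; [exists b | exists a]; rewrite S_pair; auto. }
  rewrite (reduced_alternating Hx Hy Hxy Hred).
  rewrite <- Hlen in Hodd. apply Nat.odd_spec in Hodd as [k ->].
  now apply alt_word_odd_reflection.
Qed.

Lemma len_succ_induced_arrow u v :
  len S v = len S u + 1 -> induced_arrow S (fun _ => True) u v.
Proof.
  intro E.
  assert (Hodd : forall x y, (x = u /\ y = v) \/ (x = v /\ y = u) ->
            reflection S (gmul x (ginv y))).
  { intros x y Hxy. apply odd_len_reflection. rewrite odd_len_div.
    destruct Hxy as [[-> ->] | [-> ->]];
      rewrite E, Nat.add_1_r, Nat.odd_succ, <- Nat.negb_odd;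
      now destruct (Nat.odd (len S u)). }
  repeat split; [now apply Hodd; left | | intros ->; lia].
  apply rt_step. exists (gmul v (ginv u)). repeat split; [now apply Hodd; right | | lia].
  now rewrite <- gmulA, gmulVl, gmul1r.
Qed.

Lemma shorter_path {u t} :
  len S u < len S t -> clos_refl_trans W (induced_arrow S (fun _ => True)) u t.
Proof.
  intro Hlt.
  destruct (reduced_word_exists S_invol S_generates t) as [l [Hred [<- Hlen]]].
  assert (Hprefix : forall j, j <= length l -> len S (word_prod (firstn j l)) = j).
  { intros j Hj. rewrite <- (firstn_skipn j l) in Hred.
    rewrite (len_reduced S_invol S_generates (proj1 (reduced_app Hred))).
    now apply firstn_length_le. }
  enough (Hpath : forall j, len S u < j <= length l ->
            clos_refl_trans W (induced_arrow S (fun _ => True)) u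
              (word_prod (firstn j l))).
  { rewrite <- (firstn_all l). apply Hpath. lia. }
  induction j as [|j IH]; intros Hj; [lia|].
  destruct (Nat.eq_dec j (len S u)) as [-> | Hne].
  - apply rt_step, len_succ_induced_arrow. rewrite Hprefix; lia.
  - apply rt_trans with (word_prod (firstn j l)); [apply IH; lia|].
    apply rt_step, len_succ_induced_arrow. rewrite !Hprefix; lia.
Qed.

Lemma full_dihedral_refl_subgroup : dihedral_refl_subgroup S (fun _ => True).
Proof.
  split.
  - exists S. split; [exact (generator_reflection S)|]. intro w. now split.
  - exists a, b. split; [exact a_neq_b|]. intro t. now rewrite canon_gens_full, S_pair.
Qed.

End LengthParity.

Theorem mainTheorem4 (W : group) (S : W -> Prop)
  (HC : coxeter_system S) (Hd : dihedral_system S)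
  (t t' : W) (Ht : reflection S t) (Ht' : reflection S t') :
  len S t' < len S t <-> (sqsub S t' t /\ t' <> t).
Proof.
  pose proof (coxeter_len_odd_mul HC) as len_odd_mul.
  destruct HC as [S_inv [S_generates _]].
  assert (S_invol : forall s, S s -> gmul s s = gone) by firstorder.
  assert (S_nontrivial : forall s, S s -> s <> gone) by firstorder.
  destruct Hd as [a [b [a_neq_b S_pair]]].
  split.
  - intro Hlt. split; [|intros ->; lia].
    apply t_step. right. exists (fun _ => True).
    split.
    + exact (full_dihedral_refl_subgroup
               S_invol S_nontrivial S_generates len_odd_mul a_neq_b S_pair).
    + repeat split.
      exact (shorter_path S_invol S_generates len_odd_mul a_neq_b S_pair Hlt).
  - intros [Hsq Hne]. now destruct (sqsub_len Hsq).
Qed.
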